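(* For any graph $\Gamma$, the polygraph monoid $P(\Gamma)=IH^0(M(\Gamma))$ is strongly $F^*$-inverse.
   Context: A graph $\Gamma=(V,E)$ has vertex set $V$ and irreflexive symmetric edge relation $E$. The graph monoid $M(\Gamma)$ is the monoid presented by $\langle x_v\ (v\in V)\mid x_ux_v=x_vx_u \text{ for } (u,v)\in E\rangle$. For a right cancellative monoid $D$ and $a\in D$, $\rho_a:D\to D$, $x\mapsto xa$, is regarded as a partial bijection of $D$; the inverse hull $IH(D)$ is the inverse submonoid of the symmetric inverse monoid on $D$ generated by all $\rho_a$, and $IH^0(D)=IH(D)\cup\{\emptyset\}$ (the empty map being a zero). In an inverse monoid, the natural partial order is $a\le b$ iff $a=eb$ for some idempotent $e$. An inverse monoid $S$ is $F^*$-inverse if every nonzero element (every element, if $S$ has no zero) lies beneath a unique maximal element in the natural partial order. $S$ is strongly $E^*$-unitary if there is a group $G$ and a function $\theta:S\to G^0$ ($G$ with a zero adjoined) such that $a\theta=0$ iff $a$ is the zero of $S$, $a\theta=1$ iff $a$ is a nonzero idempotent, and $(ab)\theta=(a\theta)(b\theta)$ whenever $ab$ is not zero. $S$ is strongly $F^*$-inverse if it is both $F^*$-inverse and strongly $E^*$-unitary. *)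

From Stdlib Require Import List Relations.
Import ListNotations.
Set Implicit Arguments.

Definition is_graph (V : Type) (E : V -> V -> Prop) : Prop :=
  (forall u, ~ E u u) /\ (forall u v, E u v -> E v u).

Inductive mstep (V : Type) (E : V -> V -> Prop) : list V -> list V -> Prop :=
| mstep_swap : forall (u w : list V) (a b : V),
    E a b -> mstep E (u ++ a :: b :: w) (u ++ b :: a :: w).

(** The congruence on the free monoid [list V] defining M(Gamma):
    equivalence closure of the one-step commutations in context. *)
Definition meq (V : Type) (E : V -> V -> Prop) : list V -> list V -> Prop :=
  clos_refl_sym_trans (list V) (mstep E).

(** Elements of M(Gamma) are congruence classes [mcls E w] (subsets of words);
    the ambient type of classes is [list V -> Prop], and the carrier of
    M(Gamma) is the set of those predicates of the form [mcls E w].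
    The product is [mcls E u * mcls E v = mcls E (u ++ v)]. *)
Definition mcls (V : Type) (E : V -> V -> Prop) (w : list V) : list V -> Prop :=
  meq E w.

Definition elt (V : Type) : Type := list V -> Prop.

(** Partial maps on M(Gamma), represented as relations (graphs of maps). *)
Definition prel (V : Type) : Type := elt V -> elt V -> Prop.

Definition rho (V : Type) (E : V -> V -> Prop) (v : list V) : prel V :=
  fun x y => exists u, x = mcls E u /\ y = mcls E (u ++ v).

Definition idM (V : Type) (E : V -> V -> Prop) : prel V :=
  fun x y => x = y /\ exists u, x = mcls E u.

(** Composition of partial maps, maps written on the right:
    x (f g) = (x f) g. *)
Definition pcomp (V : Type) (f g : prel V) : prel V :=
  fun x z => exists y, f x y /\ g y z.

Definition pinv (V : Type) (f : prel V) : prel V := fun x y => f y x.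

Definition pempty (V : Type) : prel V := fun _ _ => False.

Inductive IH (V : Type) (E : V -> V -> Prop) : prel V -> Prop :=
| IH_one : IH E (idM E)
| IH_rho : forall v, IH E (rho E v)
| IH_comp : forall f g, IH E f -> IH E g -> IH E (pcomp f g)
| IH_inv : forall f, IH E f -> IH E (pinv f).

Definition P0 (V : Type) (E : V -> V -> Prop) (f : prel V) : Prop :=
  IH E f \/ f = @pempty V.

Definition P_idem (V : Type) (E : V -> V -> Prop) (e : prel V) : Prop :=
  P0 E e /\ pcomp e e = e.

Definition P_le (V : Type) (E : V -> V -> Prop) (a b : prel V) : Prop :=
  exists e, P_idem E e /\ a = pcomp e b.

Definition P_maximal (V : Type) (E : V -> V -> Prop) (m : prel V) : Prop :=
  P0 E m /\ forall b, P0 E b -> P_le E m b -> b = m.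

Definition P_Fstar (V : Type) (E : V -> V -> Prop) : Prop :=
  forall a, P0 E a -> a <> @pempty V ->
    exists! m, P_maximal E m /\ P_le E a m.

Record group : Type := Group {
  gcar :> Type;
  gmul : gcar -> gcar -> gcar;
  gone : gcar;
  ginv : gcar -> gcar;
  gmulA : forall x y z, gmul x (gmul y z) = gmul (gmul x y) z;
  gmul1 : forall x, gmul gone x = x;
  gmulV : forall x, gmul (ginv x) x = gone
}.

(** G^0 = G with a zero adjoined: [None] is the zero. *)
Definition omul (G : group) (x y : option G) : option G :=
  match x, y with
  | Some a, Some b => Some (gmul G a b)
  | _, _ => None
  end.

Definition P_strongly_Estar_unitary (V : Type) (E : V -> V -> Prop) : Prop :=
  exists (G : group) (theta : prel V -> option G),
    (forall a, P0 E a -> (theta a = None <-> a = @pempty V)) /\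
    (forall a, P0 E a -> (theta a = Some (gone G) <-> (a <> @pempty V /\ P_idem E a))) /\
    (forall a b, P0 E a -> P0 E b -> pcomp a b <> @pempty V ->
       theta (pcomp a b) = @omul G (theta a) (theta b)).

Definition P_strongly_Fstar (V : Type) (E : V -> V -> Prop) : Prop :=
  P_Fstar E /\ P_strongly_Estar_unitary E.

From Stdlib Require Import List Relations Lia ZArith.
From Stdlib Require Import Classical ClassicalEpsilon FunctionalExtensionality
  PropExtensionality ProofIrrelevance.
Import ListNotations.

(* Two words are equal in M(Γ) iff their projections to every pair of
   non-adjacent vertices coincide.  Hence M(Γ) is cancellative, any two elements
   have a greatest common left divisor, and two elements with a common left
   multiple have a least one.  Consequently every nonzero element of P(Γ) is
   ρ_a^{-1}ρ_b = {(ua, ub)}, the natural order is inclusion, and the unique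
   maximal element above ρ_p^{-1}ρ_q is ρ_c^{-1}ρ_d, where p = gc, q = gd and g
   is the greatest common left divisor of p and q.
   The projections also give an embedding h of M(Γ) into a group of
   bijections: the letter c acts on a state (a, b, f) only when {a, b} is a
   non-edge containing c, by toggling the cell (0, c) of the tape f and shifting
   it, so that f records the projection of the word to {a, b}.  Since
   h(ua)^{-1} h(ub) = h(a)^{-1} h(b), θ(ρ_a^{-1}ρ_b) = h(a)^{-1} h(b) is well
   defined, and it is multiplicative because a product of nonzero elements is
   computed through a common middle point. *)

Definition asbool (P : Prop) : bool :=
  if excluded_middle_informative P then true else false.

Lemma asboolT (P : Prop) : P -> asbool P = true.
Proof. unfold asbool; destruct (excluded_middle_informative P); tauto. Qed.

Lemma asboolF (P : Prop) : ~ P -> asbool P = false.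
Proof. unfold asbool; destruct (excluded_middle_informative P); tauto. Qed.

Lemma asboolP (P : Prop) : asbool P = true -> P.
Proof. unfold asbool; destruct (excluded_middle_informative P); congruence. Qed.

Ltac rel_ext :=
  apply functional_extensionality; intro; apply functional_extensionality; intro;
  apply propositional_extensionality; split.

Record bijection (T : Type) := Bijection {
  fwd : T -> T;
  bwd : T -> T;
  bwdK : forall x, bwd (fwd x) = x;
  fwdK : forall x, fwd (bwd x) = x }.
Arguments Bijection {T}.
Arguments fwd {T}. Arguments bwd {T}. Arguments bwdK {T}. Arguments fwdK {T}.

Section BijectionGroup.
Variable T : Type.

Lemma bijection_eq (s t : bijection T) : fwd s = fwd t -> s = t.
Proof.
  intros Hf.
  assert (Hb : bwd s = bwd t).
  { apply functional_extensionality; intros x.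
    rewrite <- (fwdK t x) at 1. rewrite <- Hf. apply bwdK. }
  destruct s as [f1 b1 p1 q1], t as [f2 b2 p2 q2]; simpl in *; subst.
  f_equal; apply proof_irrelevance.
Qed.

Definition bij_mul (s t : bijection T) : bijection T.
Proof.
  refine (Bijection (fun x => fwd s (fwd t x)) (fun x => bwd t (bwd s x)) _ _);
    intros x; [rewrite !bwdK | rewrite !fwdK]; reflexivity.
Defined.

Definition bij_one : bijection T :=
  Bijection (fun x => x) (fun x => x) (fun x => eq_refl) (fun x => eq_refl).

Definition bij_inv (s : bijection T) : bijection T :=
  Bijection (bwd s) (fwd s) (fwdK s) (bwdK s).

Definition Bij : group.
Proof.
  refine (@Group (bijection T) bij_mul bij_one bij_inv _ _ _);
    intros; apply bijection_eq; try reflexivity.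
  simpl. apply functional_extensionality; intros; apply bwdK.
Defined.

Definition bij_div (s t : bijection T) : bijection T := bij_mul (bij_inv s) t.

Lemma bij_div_mull (p q r : bijection T) :
  bij_div (bij_mul p q) (bij_mul p r) = bij_div q r.
Proof.
  apply bijection_eq; apply functional_extensionality; intros x; simpl.
  rewrite bwdK. reflexivity.
Qed.

Lemma bij_mul_div (x y z : bijection T) :
  bij_mul (bij_div x y) (bij_div y z) = bij_div x z.
Proof.
  apply bijection_eq; apply functional_extensionality; intros w; simpl.
  rewrite fwdK. reflexivity.
Qed.

Lemma bij_div_eq1 (p q : bijection T) : bij_div p q = bij_one <-> p = q.
Proof.
  split; [|intros ->; apply bijection_eq, functional_extensionality, bwdK].
  intros H. apply bijection_eq, functional_extensionality. intros x.
  assert (Hx := f_equal (fun s => fwd s x) H). simpl in Hx.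
  rewrite <- Hx at 1. rewrite fwdK. reflexivity.
Qed.

End BijectionGroup.
Arguments bij_mul {T}. Arguments bij_one {T}. Arguments bij_div {T}.

Section PolygraphMonoid.
Variables (V : Type) (E : V -> V -> Prop).
Hypothesis HE : is_graph E.

Lemma meq_refl u : meq E u u.
Proof. apply rst_refl. Qed.

Lemma meq_sym u v : meq E u v -> meq E v u.
Proof. apply rst_sym. Qed.

Lemma meq_trans u v w : meq E u v -> meq E v w -> meq E u w.
Proof. apply rst_trans. Qed.

Lemma meq_app_l w u v : meq E u v -> meq E (w ++ u) (w ++ v).
Proof.
  induction 1 as [x y []| | |]; [|apply rst_refl|apply rst_sym; auto|eapply rst_trans; eauto].
  apply rst_step. rewrite !app_assoc. constructor. assumption.
Qed.

Lemma meq_app_r w u v : meq E u v -> meq E (u ++ w) (v ++ w).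
Proof.
  induction 1 as [x y []| | |]; [|apply rst_refl|apply rst_sym; auto|eapply rst_trans; eauto].
  apply rst_step. rewrite <- !app_assoc. constructor. assumption.
Qed.

Lemma meq_cons x u v : meq E u v -> meq E (x :: u) (x :: v).
Proof. exact (meq_app_l [x] u v). Qed.

Lemma meq_length u v : meq E u v -> length u = length v.
Proof.
  induction 1 as [x y []| | |]; try congruence.
  rewrite !length_app. reflexivity.
Qed.

Lemma meq_commute_front x w1 w2 :
  (forall y, In y w1 -> E x y) -> meq E (w1 ++ x :: w2) (x :: w1 ++ w2).
Proof.
  induction w1 as [|y w1 IH]; intros Hx; simpl; [apply meq_refl|].
  eapply meq_trans; [apply meq_cons, IH; intros; apply Hx; simpl; auto|].
  apply rst_step. apply (mstep_swap E [] (w1 ++ w2) y x).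
  apply (proj2 HE). apply Hx. simpl; auto.
Qed.

Definition proj_pair (a b : V) (w : list V) : list V :=
  filter (fun c => asbool (c = a \/ c = b)) w.

Definition same_projections (u v : list V) : Prop :=
  forall a b, ~ E a b -> proj_pair a b u = proj_pair a b v.

Lemma meq_same_projections u v : meq E u v -> same_projections u v.
Proof.
  induction 1 as [u v [w1 w2 x y Hxy]| |u v _ IH|u v w _ IH1 _ IH2];
    unfold same_projections in *; intros a b Hab.
  - unfold proj_pair. rewrite !filter_app. f_equal. simpl.
    destruct (asbool (x = a \/ x = b)) eqn:Hx; destruct (asbool (y = a \/ y = b)) eqn:Hy;
      try reflexivity.
    exfalso. apply asboolP in Hx, Hy. destruct HE as [Hirr Hsym].
    destruct Hx as [-> | ->], Hy as [-> | ->];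
      solve [eapply Hirr; eassumption | apply Hab; auto].
  - reflexivity.
  - symmetry; apply IH, Hab.
  - rewrite IH1, IH2 by exact Hab. reflexivity.
Qed.

Lemma first_occurrence (x : V) w :
  In x w -> exists w1 w2, w = w1 ++ x :: w2 /\ ~ In x w1.
Proof.
  induction w as [|c w IH]; simpl; intros Hin; [contradiction|].
  destruct (classic (c = x)) as [->|Hc]; [exists [], w; auto|].
  destruct Hin as [|Hin]; [congruence|].
  destruct (IH Hin) as (w1 & w2 & -> & Hn).
  exists (c :: w1), w2. split; [reflexivity|]. simpl. tauto.
Qed.

Lemma proj_pair_head (x c : V) w1 w2 :
  ~ In x w1 -> In c w1 -> exists t, proj_pair x c (w1 ++ w2) = c :: t.
Proof.
  induction w1 as [|y w1 IH]; simpl; intros Hx Hc; [contradiction|].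
  unfold proj_pair in *; simpl.
  destruct (classic (y = c)) as [->|Hy]; [rewrite asboolT by auto; eauto|].
  destruct Hc as [|Hc]; [congruence|].
  rewrite asboolF by tauto. apply IH; auto.
Qed.

(* If the first occurrence of x in v were preceded by a letter c not adjacent
   to x, the projection of v to {x, c} would start with c. *)
Lemma same_projections_cons_split x u v :
  same_projections (x :: u) v ->
  exists v1 v2, v = v1 ++ x :: v2 /\ forall c, In c v1 -> E x c.
Proof.
  intros H.
  assert (Hin : In x v).
  { assert (Hx := H x x (proj1 HE x)). unfold proj_pair in Hx. simpl in Hx.
    rewrite asboolT in Hx by auto.
    assert (Hf : In x (filter (fun c => asbool (c = x \/ c = x)) v))
      by (rewrite <- Hx; simpl; auto).
    apply filter_In in Hf. tauto. }
  destruct (first_occurrence x v Hin) as (v1 & v2 & -> & Hn).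
  exists v1, v2. split; [reflexivity|].
  intros c Hc. apply NNPP. intros Hxc.
  destruct (proj_pair_head x c v1 (x :: v2) Hn Hc) as [t Ht].
  assert (Hp := H x c Hxc). rewrite Ht in Hp.
  unfold proj_pair in Hp. simpl in Hp. rewrite asboolT in Hp by auto.
  injection Hp as ->. contradiction.
Qed.

Lemma same_projections_cons x u v :
  same_projections (x :: u) (x :: v) -> same_projections u v.
Proof.
  unfold same_projections, proj_pair; intros H a b Hab. specialize (H a b Hab).
  simpl in H. destruct (asbool (x = a \/ x = b)); congruence.
Qed.

Lemma same_projections_meq u v : same_projections u v -> meq E u v.
Proof.
  remember (length u) as n eqn:Hn. revert u v Hn.
  induction n as [|n IH]; intros [|x u] v Hn H; try discriminate.
  - destruct v as [|c v]; [apply meq_refl|].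
    assert (Hc := H c c (proj1 HE c)). unfold proj_pair in Hc. simpl in Hc.
    rewrite asboolT in Hc by auto. discriminate.
  - destruct (same_projections_cons_split x u v H) as (v1 & v2 & -> & Hc).
    assert (Hm := meq_commute_front x v1 v2 Hc).
    apply meq_trans with (x :: v1 ++ v2); [|apply meq_sym, Hm].
    apply meq_cons, IH; [simpl in Hn; congruence|].
    apply (same_projections_cons x).
    intros a b Hab. rewrite (H a b Hab). apply meq_same_projections; assumption.
Qed.

Lemma meq_cancel_l w u v : meq E (w ++ u) (w ++ v) -> meq E u v.
Proof.
  intros H. apply same_projections_meq. intros a b Hab.
  assert (Hp := meq_same_projections _ _ H a b Hab).
  unfold proj_pair in *. rewrite !filter_app in Hp. eapply app_inv_head; eauto.
Qed.

Lemma meq_cancel_r w u v : meq E (u ++ w) (v ++ w) -> meq E u v.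
Proof.
  intros H. apply same_projections_meq. intros a b Hab.
  assert (Hp := meq_same_projections _ _ H a b Hab).
  unfold proj_pair in *. rewrite !filter_app in Hp. eapply app_inv_tail; eauto.
Qed.

Lemma proj_pair_rev a b w : proj_pair a b (rev w) = rev (proj_pair a b w).
Proof.
  unfold proj_pair. induction w as [|c w IH]; simpl; [reflexivity|].
  rewrite filter_app, IH. simpl.
  destruct (asbool (c = a \/ c = b)); simpl; [reflexivity|apply app_nil_r].
Qed.

Lemma meq_rev u v : meq E u v -> meq E (rev u) (rev v).
Proof.
  intros H. apply same_projections_meq. intros a b Hab.
  rewrite !proj_pair_rev. f_equal. apply meq_same_projections; assumption.
Qed.

Definition is_prefix (d a : list V) : Prop := exists c, meq E a (d ++ c).

Definition is_suffix (b m : list V) : Prop := exists u, meq E m (u ++ b).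

Lemma is_prefix_nil a : is_prefix [] a.
Proof. exists a. apply meq_refl. Qed.

Lemma is_prefix_meq_l d d' a : meq E d d' -> is_prefix d a <-> is_prefix d' a.
Proof.
  intros Hd; split; intros [c Hc]; exists c; eapply meq_trans; try exact Hc;
    apply meq_app_r; auto using meq_sym.
Qed.

Lemma is_prefix_meq_r d a a' : meq E a a' -> is_prefix d a <-> is_prefix d a'.
Proof.
  intros Ha; split; intros [c Hc]; exists c; eapply meq_trans; try exact Hc;
    auto using meq_sym.
Qed.

Lemma is_prefix_mull w d a : is_prefix d a -> is_prefix (w ++ d) (w ++ a).
Proof. intros [c Hc]. exists c. rewrite <- app_assoc. apply meq_app_l, Hc. Qed.

Lemma is_prefix_mull_inv w d a : is_prefix (w ++ d) (w ++ a) -> is_prefix d a.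
Proof. intros [c Hc]. exists c. rewrite <- app_assoc in Hc. apply (meq_cancel_l w), Hc. Qed.

Lemma is_prefix_app_self g w : is_prefix (g ++ w) g -> w = [].
Proof.
  intros [e He]. apply meq_length in He. rewrite !length_app in He.
  destruct w; [reflexivity | simpl in He; lia].
Qed.

Lemma is_prefix_commute x d a :
  (forall y, In y d -> E x y) -> is_prefix d a -> is_prefix d (x :: a).
Proof.
  intros Hx [c Hc]. exists (x :: c).
  eapply meq_trans; [apply meq_cons, Hc|]. apply meq_sym, meq_commute_front, Hx.
Qed.

Lemma is_prefix_skip x d a :
  is_prefix d (x :: a) -> ~ is_prefix [x] d ->
  (forall y, In y d -> E x y) /\ is_prefix d a.
Proof.
  intros [c Hc] Hnx.
  destruct (same_projections_cons_split x a (d ++ c)) as (w1 & w2 & Heq & Hw1).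
  { apply meq_same_projections, Hc. }
  apply app_eq_app in Heq. destruct Heq as [l [[-> Hl] | [-> Hl]]].
  - destruct l as [|z l]; simpl in Hl.
    + subst c. rewrite app_nil_r in Hc |- *. split; [exact Hw1|].
      exists w2. apply (meq_cancel_l [x]). eapply meq_trans; [exact Hc|].
      apply meq_commute_front, Hw1.
    + injection Hl as -> ->. exfalso. apply Hnx.
      exists (w1 ++ l). apply meq_commute_front, Hw1.
  - assert (Hd : forall y, In y d -> E x y) by (intros; apply Hw1, in_or_app; auto).
    split; [exact Hd|]. subst c. exists (l ++ w2).
    apply (meq_cancel_l [x]). eapply meq_trans; [exact Hc|].
    rewrite (app_assoc d l (x :: w2)), (app_assoc d l w2).
    apply meq_commute_front, Hw1.
Qed.

Lemma prefix_gcd_aux n a b :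
  length a < n ->
  exists g, is_prefix g a /\ is_prefix g b /\
    forall d, is_prefix d a -> is_prefix d b -> is_prefix d g.
Proof.
  revert a b. induction n as [|n IH]; intros a b Hl; [lia|].
  destruct (classic (exists x, is_prefix [x] a /\ is_prefix [x] b))
    as [[x [[a' Ha] [b' Hb]]] | Hno].
  - assert (Hla : length a' < n) by (apply meq_length in Ha; simpl in Ha; lia).
    destruct (IH a' b' Hla) as (g & Hga & Hgb & Hg).
    setoid_rewrite (is_prefix_meq_r _ _ _ Ha).
    setoid_rewrite (is_prefix_meq_r _ _ _ Hb).
    exists (x :: g). split; [|split]; [apply (is_prefix_mull [x]); assumption..|].
    intros d Hda Hdb.
    destruct (classic (is_prefix [x] d)) as [[d' Hd] | Hnd].
    + apply (is_prefix_meq_l _ _ _ Hd) in Hda, Hdb. apply (is_prefix_meq_l _ _ _ Hd).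
      apply (is_prefix_mull [x]), Hg; eapply (is_prefix_mull_inv [x]); eassumption.
    + destruct (is_prefix_skip x d a' Hda Hnd) as [Hx Hda'].
      destruct (is_prefix_skip x d b' Hdb Hnd) as [_ Hdb'].
      apply is_prefix_commute; auto.
  - exists []. split; [|split]; [apply is_prefix_nil..|].
    intros [|y d] [c1 Hc1] [c2 Hc2]; [apply is_prefix_nil|].
    exfalso. apply Hno. exists y. split; [exists (d ++ c1) | exists (d ++ c2)]; assumption.
Qed.

Lemma prefix_gcd a b :
  exists g, is_prefix g a /\ is_prefix g b /\
    forall d, is_prefix d a -> is_prefix d b -> is_prefix d g.
Proof. apply (prefix_gcd_aux (S (length a))). lia. Qed.

Lemma is_suffix_rev b m : is_suffix b m <-> is_prefix (rev b) (rev m).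
Proof.
  split; intros [u Hu].
  - exists (rev u). rewrite <- rev_app_distr. apply meq_rev, Hu.
  - exists (rev u). apply meq_rev in Hu. rewrite rev_app_distr, !rev_involutive in Hu.
    exact Hu.
Qed.

Lemma prefix_gcd_cofactors p q g c d :
  meq E p (g ++ c) -> meq E q (g ++ d) ->
  (forall w, is_prefix w p -> is_prefix w q -> is_prefix w g) ->
  forall w, is_prefix w c -> is_prefix w d -> w = [].
Proof.
  intros Hc Hd Hg w Hwc Hwd. apply (is_prefix_app_self g), Hg.
  - apply (is_prefix_meq_r _ _ _ Hc), is_prefix_mull, Hwc.
  - apply (is_prefix_meq_r _ _ _ Hd), is_prefix_mull, Hwd.
Qed.

Lemma suffix_gcd a b :
  exists g, is_suffix g a /\ is_suffix g b /\
    forall d, is_suffix d a -> is_suffix d b -> is_suffix d g.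
Proof.
  destruct (prefix_gcd (rev a) (rev b)) as (g & Ha & Hb & Hg).
  exists (rev g). setoid_rewrite is_suffix_rev. rewrite rev_involutive. auto.
Qed.

Definition common_multiple (b c m : list V) : Prop := is_suffix b m /\ is_suffix c m.

(* A common multiple m that is not least is replaced by its suffix-gcd with a
   common multiple not ending in m, which is strictly shorter. *)
Lemma least_common_multiple_aux n b c m :
  length m < n -> common_multiple b c m ->
  exists m0, common_multiple b c m0 /\
    forall m', common_multiple b c m' -> is_suffix m0 m'.
Proof.
  revert m. induction n as [|n IH]; intros m Hl Hm; [lia|].
  destruct (classic (forall m', common_multiple b c m' -> is_suffix m m'))
    as [Hleast|Hnot]; [exists m; auto|].
  apply not_all_ex_not in Hnot. destruct Hnot as [m' Hm'].
  apply imply_to_and in Hm'. destruct Hm' as [Hcm' Hns].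
  destruct (suffix_gcd m m') as (g & [u Hgm] & [v Hgm'] & Hg).
  apply (IH g).
  - destruct u as [|z u].
    + exfalso. apply Hns. exists v.
      eapply meq_trans; [exact Hgm'|]. apply meq_app_l, meq_sym, Hgm.
    + apply meq_length in Hgm. rewrite length_app in Hgm. simpl in Hgm. lia.
  - destruct Hm, Hcm'. split; apply Hg; assumption.
Qed.

Lemma suffix_lcm b c u u' :
  meq E (u ++ b) (u' ++ c) ->
  exists b' c', meq E (b' ++ b) (c' ++ c) /\
    forall v v', meq E (v ++ b) (v' ++ c) ->
      exists w, meq E v (w ++ b') /\ meq E v' (w ++ c').
Proof.
  intros H.
  assert (Hcm : common_multiple b c (u ++ b))
    by (split; [exists u; apply meq_refl | exists u'; exact H]).
  destruct (least_common_multiple_aux (S (length (u ++ b))) b c (u ++ b)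
              (Nat.lt_succ_diag_r _) Hcm) as (m0 & [[b' Hb'] [c' Hc']] & Hleast).
  exists b', c'. split; [eapply meq_trans; [apply meq_sym, Hb'|exact Hc']|].
  intros v v' Hv.
  destruct (Hleast (v ++ b)) as [w Hw];
    [split; [exists v; apply meq_refl | exists v'; exact Hv]|].
  exists w. split.
  - apply (meq_cancel_r b). rewrite <- app_assoc.
    eapply meq_trans; [exact Hw|]. apply meq_app_l, Hb'.
  - apply (meq_cancel_r c). rewrite <- app_assoc.
    eapply meq_trans; [apply meq_sym, Hv|]. eapply meq_trans; [exact Hw|].
    apply meq_app_l, Hc'.
Qed.

Lemma mcls_eq u v : mcls E u = mcls E v <-> meq E u v.
Proof.
  split.
  - intros H. assert (H1 := f_equal (fun f => f v) H). simpl in H1. unfold mcls in H1.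
    rewrite H1. apply meq_refl.
  - intros H. unfold mcls. apply functional_extensionality; intro w.
    apply propositional_extensionality.
    split; intros; eapply meq_trans; eauto using meq_sym.
Qed.

Definition rhoVrho (a b : list V) : prel V :=
  fun x y => exists u, x = mcls E (u ++ a) /\ y = mcls E (u ++ b).

Definition psub (f g : prel V) : Prop := forall x y, f x y -> g x y.

Lemma rhoVrho_pair a b : rhoVrho a b (mcls E a) (mcls E b).
Proof. exists []. auto. Qed.

Lemma rhoVrho_neq0 a b : rhoVrho a b <> @pempty V.
Proof. intros H. assert (Hp := rhoVrho_pair a b). rewrite H in Hp. exact Hp. Qed.

Lemma rhoVrho_meq a b a' b' :
  meq E a a' -> meq E b b' -> rhoVrho a b = rhoVrho a' b'.
Proof.
  intros Ha Hb. rel_ext; intros [u [-> ->]]; exists u;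
    split; apply mcls_eq, meq_app_l; auto using meq_sym.
Qed.

Lemma psub_rhoVrho a b c d :
  psub (rhoVrho a b) (rhoVrho c d) <->
  exists w, meq E a (w ++ c) /\ meq E b (w ++ d).
Proof.
  split.
  - intros H. destruct (H _ _ (rhoVrho_pair a b)) as [w [H1 H2]].
    exists w. split; apply mcls_eq; assumption.
  - intros [w [H1 H2]] x y [u [-> ->]]. exists (u ++ w).
    rewrite <- !app_assoc. split; apply mcls_eq, meq_app_l; assumption.
Qed.

Lemma pcomp0f (f : prel V) : pcomp (@pempty V) f = @pempty V.
Proof. rel_ext; [intros [y [[] _]] | intros []]. Qed.

Lemma pcompf0 (f : prel V) : pcomp f (@pempty V) = @pempty V.
Proof. rel_ext; [intros [y [_ []]] | intros []]. Qed.

Lemma rhoVrho_comp a b c d b' c' :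
  meq E (b' ++ b) (c' ++ c) ->
  (forall u u', meq E (u ++ b) (u' ++ c) ->
     exists w, meq E u (w ++ b') /\ meq E u' (w ++ c')) ->
  pcomp (rhoVrho a b) (rhoVrho c d) = rhoVrho (b' ++ a) (c' ++ d).
Proof.
  intros Hbc Hleast. rel_ext.
  - intros [y [[u [-> ->]] [u' [Hy ->]]]]. apply mcls_eq in Hy.
    destruct (Hleast u u' Hy) as [w [Hw1 Hw2]]. exists w. rewrite !app_assoc.
    split; apply mcls_eq, meq_app_r; assumption.
  - intros [w [-> ->]]. exists (mcls E ((w ++ b') ++ b)). split.
    + exists (w ++ b'). rewrite app_assoc. auto.
    + exists (w ++ c'). rewrite app_assoc. split; [|reflexivity].
      apply mcls_eq. rewrite <- !app_assoc. apply meq_app_l, Hbc.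
Qed.

Lemma rhoVrho_comp0 a b c d :
  ~ (exists u u', meq E (u ++ b) (u' ++ c)) ->
  pcomp (rhoVrho a b) (rhoVrho c d) = @pempty V.
Proof.
  intros H. rel_ext; [|intros []].
  intros [y [[u [-> ->]] [u' [Hy ->]]]]. apply H. exists u, u'. apply mcls_eq, Hy.
Qed.

Lemma idM_rhoVrho : idM E = rhoVrho [] [].
Proof.
  rel_ext.
  - intros [-> [u ->]]. exists u. rewrite app_nil_r. auto.
  - intros [u [-> ->]]. split; [reflexivity|]. exists (u ++ []). reflexivity.
Qed.

Lemma rho_rhoVrho v : rho E v = rhoVrho [] v.
Proof. rel_ext; intros [u [-> ->]]; exists u; rewrite app_nil_r; auto. Qed.

Lemma pinv_rhoVrho a b : pinv (rhoVrho a b) = rhoVrho b a.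
Proof. unfold pinv. rel_ext; intros [u [H1 H2]]; exists u; auto. Qed.

Lemma IH_rhoVrho a b : IH E (rhoVrho a b).
Proof.
  replace (rhoVrho a b) with (pcomp (pinv (rho E a)) (rho E b)).
  - apply IH_comp; [apply IH_inv|]; apply IH_rho.
  - rewrite !rho_rhoVrho, pinv_rhoVrho.
    apply (rhoVrho_comp a [] [] b [] []); [apply meq_refl|].
    intros u u' Hu. exists u. rewrite !app_nil_r in *.
    split; [apply meq_refl | apply meq_sym, Hu].
Qed.

Lemma P0_rhoVrho a b : P0 E (rhoVrho a b).
Proof. left. apply IH_rhoVrho. Qed.

Lemma IH_cases f : IH E f -> f = @pempty V \/ exists a b, f = rhoVrho a b.
Proof.
  induction 1 as [| v | f g _ [->|(a & b & ->)] _ [->|(c & d & ->)] | f _ [->|(a & b & ->)]].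
  - right. exists [], []. apply idM_rhoVrho.
  - right. exists [], v. apply rho_rhoVrho.
  - left. apply pcomp0f.
  - left. apply pcomp0f.
  - left. apply pcompf0.
  - destruct (classic (exists u u', meq E (u ++ b) (u' ++ c))) as [[u [u' Hu]]|Hn].
    + destruct (suffix_lcm b c u u' Hu) as (b' & c' & Hbc & Hleast).
      right. exists (b' ++ a), (c' ++ d). apply rhoVrho_comp; assumption.
    + left. apply rhoVrho_comp0, Hn.
  - left. reflexivity.
  - right. exists b, a. apply pinv_rhoVrho.
Qed.

Lemma P0_cases f : P0 E f -> f = @pempty V \/ exists a b, f = rhoVrho a b.
Proof. intros [Hf|Hf]; [apply IH_cases, Hf | left; exact Hf]. Qed.

Lemma rhoVrho_idem a b :
  pcomp (rhoVrho a b) (rhoVrho a b) = rhoVrho a b <-> meq E a b.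
Proof.
  split.
  - intros H. assert (Hp := rhoVrho_pair a b). rewrite <- H in Hp.
    destruct Hp as [y [[u [Hu ->]] [u' [Hy Hb]]]].
    apply mcls_eq in Hu, Hy, Hb.
    assert (Hl := meq_length _ _ Hu). rewrite length_app in Hl.
    destruct u; [|simpl in Hl; lia].
    apply (meq_cancel_l u'). eapply meq_trans; [apply meq_sym, Hy | exact Hb].
  - intros Hab. rewrite (rhoVrho_meq a b a a (meq_refl a) (meq_sym _ _ Hab)).
    rel_ext.
    + intros [y [[u [-> ->]] [u' [<- ->]]]]. exists u. auto.
    + intros [u [-> ->]]. exists (mcls E (u ++ a)). split; exists u; auto.
Qed.

Lemma P_idem_id e x y : P_idem E e -> e x y -> x = y.
Proof.
  intros [He0 He]. destruct (P0_cases e He0) as [->|(a & b & ->)]; [intros []|].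
  apply rhoVrho_idem in He. intros [u [-> ->]]. apply mcls_eq, meq_app_l, He.
Qed.

Lemma P_le_psub f g : P0 E f -> P0 E g -> P_le E f g <-> psub f g.
Proof.
  intros Hf Hg. split.
  - intros [e [He ->]] x z [y [Hxy Hyz]]. rewrite (P_idem_id e x y He Hxy). exact Hyz.
  - intros Hfg. destruct (P0_cases f Hf) as [->|(a & b & ->)].
    { exists (@pempty V). split; [split; [right; reflexivity | apply pcomp0f]|].
      symmetry. apply pcomp0f. }
    destruct (P0_cases g Hg) as [->|(c & d & ->)].
    { exfalso. exact (Hfg _ _ (rhoVrho_pair a b)). }
    apply psub_rhoVrho in Hfg. destruct Hfg as [w [Ha Hb]].
    exists (rhoVrho a a). split; [split; [apply P0_rhoVrho | apply rhoVrho_idem, meq_refl]|].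
    rewrite (rhoVrho_comp a a c d [] w); simpl.
    + apply rhoVrho_meq; [apply meq_refl | exact Hb].
    + exact Ha.
    + intros u u' Hu. exists u. rewrite app_nil_r. split; [apply meq_refl|].
      apply (meq_cancel_r c). rewrite <- app_assoc.
      eapply meq_trans; [apply meq_sym, Hu | apply meq_app_l, Ha].
Qed.

Lemma P_maximal_rhoVrho c d :
  (forall w, is_prefix w c -> is_prefix w d -> w = []) -> P_maximal E (rhoVrho c d).
Proof.
  intros Hcoprime. split; [apply P0_rhoVrho|]. intros g Hg Hle.
  apply P_le_psub in Hle; [|apply P0_rhoVrho | exact Hg].
  destruct (P0_cases g Hg) as [->|(c' & d' & ->)].
  - exfalso. exact (Hle _ _ (rhoVrho_pair c d)).
  - apply psub_rhoVrho in Hle. destruct Hle as [w [Hc Hd]].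
    assert (Hw : w = []) by (apply Hcoprime; [exists c' | exists d']; assumption).
    subst w.
    apply rhoVrho_meq; apply meq_sym; assumption.
Qed.

Lemma P_Fstar_holds : P_Fstar E.
Proof.
  intros f Hf Hne. destruct (P0_cases f Hf) as [->|(p & q & ->)]; [congruence|].
  destruct (prefix_gcd p q) as (g & [c Hc] & [d Hd] & Hg).
  exists (rhoVrho c d). split; [split|].
  - apply P_maximal_rhoVrho, (prefix_gcd_cofactors p q g); assumption.
  - apply P_le_psub; [apply P0_rhoVrho.. |]. apply psub_rhoVrho. exists g. auto.
  - intros m [[Hm0 Hmax] Hle]. apply P_le_psub in Hle; [|apply P0_rhoVrho | exact Hm0].
    destruct (P0_cases m Hm0) as [->|(c' & d' & ->)];
      [exfalso; exact (Hle _ _ (rhoVrho_pair p q))|].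
    apply psub_rhoVrho in Hle. destruct Hle as [w [Hp Hq]].
    destruct (Hg w (ex_intro _ c' Hp) (ex_intro _ d' Hq)) as [e He].
    assert (Hcofactor : forall r r0 r', meq E r (g ++ r0) -> meq E r (w ++ r') ->
                                        meq E r' (e ++ r0)).
    { intros r r0 r' H0 H'. apply (meq_cancel_l w). rewrite app_assoc.
      eapply meq_trans; [apply meq_sym, H'|]. eapply meq_trans; [exact H0|].
      apply meq_app_r, He. }
    apply Hmax; [apply P0_rhoVrho|]. apply P_le_psub; [apply P0_rhoVrho.. |].
    apply psub_rhoVrho. exists e. split; eapply Hcofactor; eassumption.
Qed.

Definition tape : Type := Z -> V -> bool.
Definition state : Type := (V * V * tape)%type.

Definition shift (f : tape) : tape := fun n => f (n - 1)%Z.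
Definition unshift (f : tape) : tape := fun n => f (n + 1)%Z.
Definition toggle (c : V) (f : tape) : tape :=
  fun n v => if (Z.eqb n 0 && asbool (v = c))%bool then negb (f n v) else f n v.

Lemma toggleK c f : toggle c (toggle c f) = f.
Proof.
  unfold toggle. apply functional_extensionality; intro n;
    apply functional_extensionality; intro v.
  destruct (Z.eqb n 0 && asbool (v = c))%bool; [apply Bool.negb_involutive | reflexivity].
Qed.

Lemma shiftK f : shift (unshift f) = f.
Proof. unfold shift, unshift. apply functional_extensionality; intro n. f_equal. lia. Qed.

Lemma unshiftK f : unshift (shift f) = f.
Proof. unfold shift, unshift. apply functional_extensionality; intro n. f_equal. lia. Qed.

Definition tracks (a b c : V) : bool := (asbool (~ E a b) && asbool (c = a \/ c = b))%bool.

Definition letter_bij (c : V) : bijection state.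
Proof.
  refine (Bijection
    (fun '(a, b, f) => (a, b, if tracks a b c then shift (toggle c f) else f))
    (fun '(a, b, f) => (a, b, if tracks a b c then toggle c (unshift f) else f)) _ _);
    intros [[a b] f]; destruct (tracks a b c);
    rewrite ?unshiftK, ?toggleK, ?shiftK; reflexivity.
Defined.

Definition word_bij (w : list V) : bijection state :=
  fold_right (fun c s => bij_mul (letter_bij c) s) bij_one w.

Lemma word_bij_app u v : word_bij (u ++ v) = bij_mul (word_bij u) (word_bij v).
Proof.
  induction u as [|c u IH]; simpl; [apply bijection_eq; reflexivity|].
  rewrite IH. apply bijection_eq; reflexivity.
Qed.

Definition write (l : list V) (f : tape) : tape :=
  fold_right (fun c f => shift (toggle c f)) f l.

Definition blank : tape := fun _ _ => false.

Lemma fwd_word_bij w a b f :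
  fwd (word_bij w) (a, b, f) =
  (a, b, if asbool (~ E a b) then write (proj_pair a b w) f else f).
Proof.
  induction w as [|c w IH]; simpl; [destruct (asbool (~ E a b)); reflexivity|].
  rewrite IH. unfold tracks, proj_pair. simpl.
  destruct (asbool (~ E a b)); simpl; [|reflexivity].
  destruct (asbool (c = a \/ c = b)); reflexivity.
Qed.

Lemma write_blank_nonpos l n v : (n <= 0)%Z -> write l blank n v = false.
Proof.
  revert n. induction l as [|c l IH]; intros n Hn; simpl; [reflexivity|].
  unfold shift, toggle. rewrite (proj2 (Z.eqb_neq (n - 1) 0)) by lia.
  apply IH. lia.
Qed.

Lemma write_blank_cons_one c l v : write (c :: l) blank 1%Z v = asbool (v = c).
Proof.
  simpl. unfold shift, toggle. simpl. rewrite write_blank_nonpos by lia.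
  destruct (asbool (v = c)); reflexivity.
Qed.

Lemma write_blank_inj l1 l2 : write l1 blank = write l2 blank -> l1 = l2.
Proof.
  revert l2; induction l1 as [|c l1 IH]; intros [|d l2] H; [reflexivity|..].
  - assert (Hd := f_equal (fun f => f 1%Z d) H). cbv beta in Hd.
    rewrite write_blank_cons_one, asboolT in Hd by reflexivity. discriminate.
  - assert (Hc := f_equal (fun f => f 1%Z c) H). cbv beta in Hc.
    rewrite write_blank_cons_one, asboolT in Hc by reflexivity. discriminate.
  - assert (Hc := f_equal (fun f => f 1%Z c) H). cbv beta in Hc.
    rewrite !write_blank_cons_one, asboolT in Hc by reflexivity.
    symmetry in Hc. apply asboolP in Hc. subst d.
    f_equal. apply IH. simpl in H.
    apply (f_equal (fun f => toggle c (unshift f))) in H.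
    rewrite !unshiftK, !toggleK in H. exact H.
Qed.

Lemma word_bij_meq u v : meq E u v -> word_bij u = word_bij v.
Proof.
  intros H. apply meq_same_projections in H. apply bijection_eq, functional_extensionality.
  intros [[a b] f]. rewrite !fwd_word_bij.
  destruct (asbool (~ E a b)) eqn:Hab; [|reflexivity].
  apply asboolP in Hab. rewrite H by exact Hab. reflexivity.
Qed.

Lemma word_bij_inj u v : word_bij u = word_bij v -> meq E u v.
Proof.
  intros H. apply same_projections_meq. intros a b Hab.
  assert (Hw := f_equal (fun s => fwd s (a, b, blank)) H). cbv beta in Hw.
  rewrite !fwd_word_bij, asboolT in Hw by exact Hab.
  injection Hw as Hw. apply write_blank_inj, Hw.
Qed.

Definition elt_bij (x : elt V) : bijection state :=
  match excluded_middle_informative (exists w, x = mcls E w) with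
  | left H => word_bij (proj1_sig (constructive_indefinite_description _ H))
  | right _ => bij_one
  end.

Lemma elt_bij_mcls w : elt_bij (mcls E w) = word_bij w.
Proof.
  unfold elt_bij. destruct (excluded_middle_informative _) as [H|H]; [|exfalso; eauto].
  destruct (constructive_indefinite_description _ H) as [w' Hw']. simpl.
  apply word_bij_meq, mcls_eq. congruence.
Qed.

(* θ reads its value off an arbitrary pair of the relation; by
   [rhoVrho_pair_div] the choice does not matter on P(Γ). *)
Definition theta (f : prel V) : option (Bij state) :=
  match excluded_middle_informative (exists x y, f x y) with
  | left H =>
      let (x, Hx) := constructive_indefinite_description _ H in
      let (y, _) := constructive_indefinite_description _ Hx in
      Some (bij_div (elt_bij x) (elt_bij y))
  | right _ => None
  end.

Lemma rhoVrho_pair_div a b x y :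
  rhoVrho a b x y -> bij_div (elt_bij x) (elt_bij y) = bij_div (word_bij a) (word_bij b).
Proof.
  intros [u [-> ->]]. rewrite !elt_bij_mcls, !word_bij_app. apply bij_div_mull.
Qed.

Lemma theta_rhoVrho a b :
  theta (rhoVrho a b) = Some (bij_div (word_bij a) (word_bij b)).
Proof.
  unfold theta. destruct (excluded_middle_informative _) as [H|H].
  - destruct (constructive_indefinite_description _ H) as [x Hx].
    destruct (constructive_indefinite_description _ Hx) as [y Hxy].
    f_equal. apply rhoVrho_pair_div, Hxy.
  - exfalso. apply H. exists (mcls E a), (mcls E b). apply rhoVrho_pair.
Qed.

Lemma theta0 : theta (@pempty V) = None.
Proof.
  unfold theta. destruct (excluded_middle_informative _) as [[x [y []]]|]; reflexivity.
Qed.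

Lemma theta_idem a b :
  theta (rhoVrho a b) = Some bij_one <-> meq E a b.
Proof.
  rewrite theta_rhoVrho. split.
  - intros H. apply word_bij_inj, bij_div_eq1. congruence.
  - intros H. f_equal. apply bij_div_eq1, word_bij_meq, H.
Qed.

Lemma theta_comp a b c d :
  pcomp (rhoVrho a b) (rhoVrho c d) <> @pempty V ->
  theta (pcomp (rhoVrho a b) (rhoVrho c d)) =
  omul (Bij state) (theta (rhoVrho a b)) (theta (rhoVrho c d)).
Proof.
  intros Hne.
  assert (Hab : IH E (pcomp (rhoVrho a b) (rhoVrho c d)))
    by (apply IH_comp; apply IH_rhoVrho).
  destruct (IH_cases _ Hab) as [|(p & q & Hpq)]; [contradiction|].
  destruct (classic (exists x z, pcomp (rhoVrho a b) (rhoVrho c d) x z))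
    as [(x & z & y & Hxy & Hyz)|Hn].
  - assert (Hxz : rhoVrho p q x z) by (rewrite <- Hpq; exists y; auto).
    rewrite Hpq, !theta_rhoVrho. simpl. f_equal.
    rewrite <- (rhoVrho_pair_div _ _ _ _ Hxz), <- (rhoVrho_pair_div _ _ _ _ Hxy),
      <- (rhoVrho_pair_div _ _ _ _ Hyz).
    symmetry. apply bij_mul_div.
  - exfalso. apply Hne. rel_ext; [|intros []]. intros Hxz. apply Hn. eauto.
Qed.

Lemma P_strongly_Estar_unitary_holds : P_strongly_Estar_unitary E.
Proof.
  exists (Bij state), theta. split; [|split].
  - intros f Hf. destruct (P0_cases f Hf) as [->|(p & q & ->)].
    + split; [reflexivity | intros _; apply theta0].
    + rewrite theta_rhoVrho. split; [discriminate | intros H; contradiction (rhoVrho_neq0 p q)].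
  - intros f Hf. destruct (P0_cases f Hf) as [->|(p & q & ->)].
    + rewrite theta0. split; [discriminate | tauto].
    + change (gone (Bij state)) with (@bij_one state).
      rewrite theta_idem, <- rhoVrho_idem.
      split; [intros H; split; [apply rhoVrho_neq0 | split; [apply P0_rhoVrho | exact H]]|].
      intros [_ [_ H]]. exact H.
  - intros f g Hf Hg Hne.
    destruct (P0_cases f Hf) as [->|(a & b & ->)]; [rewrite pcomp0f in Hne; congruence|].
    destruct (P0_cases g Hg) as [->|(c & d & ->)]; [rewrite pcompf0 in Hne; congruence|].
    apply theta_comp, Hne.
Qed.

End PolygraphMonoid.

Theorem corollary4p6 (V : Type) (E : V -> V -> Prop) (HG : is_graph E) :
  P_strongly_Fstar E.
Proof.
  split; [apply P_Fstar_holds | apply P_strongly_Estar_unitary_holds]; exact HG.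
Qed.
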